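(* For $n \ge 4$ with $n \equiv 4 \pmod 6$, if $G \cong P_n$ and $v$ is an arbitrary vertex of $G$, then $\gamma_{\rm tg}(G|v) \le \gamma_{\rm tg}(G) - 1$.
   Context: Total domination game on a graph without isolated vertices: Dominator and Staller alternately choose vertices, each chosen vertex must be adjacent to some vertex not yet totally dominated; the game ends when no legal move exists; Dominator minimizes, Staller maximizes the number of moves; $\gamma_{\rm tg}(G)$ is the number of moves in the Dominator-start game under optimal play. $G|v$ is $G$ with $v$ declared already totally dominated, and $\gamma_{\rm tg}(G|v)$ is the corresponding optimal number of moves in the Dominator-start game. *)

From mathcomp Require Import all_boot.
Set Implicit Arguments. Unset Strict Implicit. Unset Printing Implicit Defensive.

Section TotalDominationGame.
Variables (T : finType) (e : rel T).

Definition nbhd (x : T) : {set T} := [set y | e x y].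

(* D = set of vertices already totally dominated.  A vertex x is a legal
   move iff it is adjacent to some vertex not yet totally dominated. *)
Definition legal_move (D : {set T}) (x : T) : bool := ~~ (nbhd x \subset D).

(* Optimal number of remaining moves from state D, when it is Dominator's
   turn (dom = true) or Staller's turn (dom = false).  The fuel k bounds the
   number of moves; every legal move enlarges D strictly, so fuel #|T| is
   always sufficient.  The identity #|T| of minn is never reached as a value
   because the min is only taken over a nonempty set of moves whose values
   are at most #|T| - 1. *)
Fixpoint tg_value (k : nat) (D : {set T}) (dom : bool) : nat :=
  match k with
  | 0 => 0
  | k'.+1 =>
      if [exists x, legal_move D x] then
        (if dom then
           \big[minn/#|T|]_(x | legal_move D x) tg_value k' (D :|: nbhd x) false
         else
           \max_(x | legal_move D x) tg_value k' (D :|: nbhd x) true).+1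
      else 0
  end.

Definition gamma_tg : nat := tg_value #|T| set0 true.

(* gamma_tg(G|v): Dominator-start game with v declared already totally dominated *)
Definition gamma_tg_at (v : T) : nat := tg_value #|T| [set v] true.

End TotalDominationGame.

Definition path_rel (n : nat) : rel 'I_n :=
  fun i j => (i.+1 == j :> nat) || (j.+1 == i :> nat).
Arguments path_rel n : clear implicits.

(* On P_n with n = 2m a vertex only dominates vertices of the other parity, so a position is a
   pair of rows of m cells (the undominated even and odd vertices) and a move marks two adjacent
   cells of one row (a single end cell for vertices 0 and n-1).
   Lower bound: Staller can always dominate exactly one new vertex, while no move dominates more
   than two, so from u undominated vertices the game lasts at least u - floor((u+1)/3) moves.
   Upper bound: let W be the sum of floor(2L/3) over the maximal runs of L unmarked cells of both
   rows.  Dominator can always dominate two new vertices while W drops by at most 2 - (W mod 2),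
   and a Staller move dominating t new vertices lowers W by at most 2t - 1, so the game lasts at
   most u - ceil(W/2) moves.
   For n = 6k+4 this gives gamma_tg(P_n) >= 4k+3, while with v dominated beforehand u = n-1 and
   W >= 4k+1, so gamma_tg(P_n|v) <= 4k+2. *)

From mathcomp Require Import all_boot zify.
Set Implicit Arguments. Unset Strict Implicit. Unset Printing Implicit Defensive.

Local Notation run_weight L := ((2 * L) %/ 3).

Section PotentialBounds.
Variables (T : finType) (e : rel T).
Local Notation move D x := (D :|: nbhd e x).

Lemma card_setC_move_lt D x : legal_move e D x -> #|~: move D x| < #|~: D|.
Proof. by move=> Dx; apply: proper_card; rewrite properC setUC properUr. Qed.

Lemma illegal_move_id D x : ~~ legal_move e D x -> move D x = D.
Proof. by rewrite negbK => /setUidPl. Qed.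

Lemma bigmin_le (P : pred T) (F : T -> nat) z x :
  P x -> \big[minn/z]_(i | P i) F i <= F x.
Proof.
move=> Px; have : x \in index_enum T by rewrite mem_index_enum.
elim: (index_enum T) => // y r IHr; rewrite inE big_cons => /predU1P[<-|xr].
  by rewrite Px geq_minl.
by case: (P y); rewrite ?geq_min IHr ?orbT.
Qed.

Lemma leq_bigmin (P : pred T) (F : T -> nat) z b :
  b <= z -> (forall i, P i -> b <= F i) -> b <= \big[minn/z]_(i | P i) F i.
Proof. by move=> bz bF; elim/big_ind: _ => // i j bi bj; rewrite leq_min bi. Qed.

Lemma tg_value_ub (pd ps : {set T} -> nat) :
  (forall D, [exists x, legal_move e D x] ->
     exists2 x, legal_move e D x & ps (move D x) < pd D) ->
  (forall D x, legal_move e D x -> pd (move D x) < ps D) ->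
  forall k D, tg_value e k D true <= pd D /\ tg_value e k D false <= ps D.
Proof.
move=> dom_move sta_move; elim=> [|k IHk] D //=; case: ifP => // Dlegal; split.
  have [x Dx ltx] := dom_move D Dlegal.
  exact: leq_ltn_trans (leq_trans (bigmin_le _ _ Dx) (IHk _).2) ltx.
have [|x Dx ->] := eq_bigmax_cond (fun i => tg_value e k (move D i) true)
  (A := legal_move e D); first by case/existsP: Dlegal => x Dx; apply/card_gt0P; exists x.
exact: leq_ltn_trans (IHk _).1 (sta_move D x Dx).
Qed.

Lemma tg_value_lb (pd ps : {set T} -> nat) :
  (forall D, pd D <= ps D) -> (forall D, ps D <= #|~: D|) ->
  (forall D x, legal_move e D x -> pd D <= (ps (move D x)).+1) ->
  (forall D, 0 < ps D -> exists2 x, legal_move e D x & ps D <= (pd (move D x)).+1) ->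
  forall k D, #|~: D| <= k -> pd D <= tg_value e k D true /\ ps D <= tg_value e k D false.
Proof.
move=> pd_ps ps_card dom_move sta_move.
have stuck D : ~~ [exists x, legal_move e D x] -> pd D = 0 /\ ps D = 0.
  move=> /existsPn Dstuck; case: (posnP (ps D)) => [ps0|/sta_move[x Dx _]].
    by have := pd_ps D; rewrite ps0 leqn0 => /eqP.
  by have := Dstuck x; rewrite Dx.
elim=> [|k IHk] D cardD /=.
  have [] := stuck D; last by move=> -> ->.
  apply/existsPn => x; apply: contraTN cardD => /card_setC_move_lt; lia.
case: ifP => Dlegal; last by have [-> ->] := stuck D (negbT Dlegal).
have IHmove x : legal_move e D x -> pd (move D x) <= tg_value e k (move D x) true /\
    ps (move D x) <= tg_value e k (move D x) false.
  by move=> /card_setC_move_lt Dx; apply: IHk; lia.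
split.
  apply: leq_trans (leqSpred _) _; rewrite ltnS; apply: leq_bigmin.
    rewrite (leq_trans (leq_pred _)) // (leq_trans (pd_ps D)) //.
    by rewrite (leq_trans (ps_card D)) // max_card.
  by move=> x Dx; have := dom_move D x Dx; have := (IHmove x Dx).2; lia.
case: (posnP (ps D)) => [-> //|/sta_move[x Dx ps_le]].
apply: leq_trans ps_le _; rewrite ltnS (leq_trans (IHmove x Dx).1) //.
exact: leq_bigmax_cond.
Qed.
End PotentialBounds.

(* [runs_weight r s] is the sum of [run_weight L] over the maximal runs of [true] in
   [nseq r true ++ s]. *)
Fixpoint runs_weight (r : nat) (s : seq bool) : nat :=
  match s with
  | [::] => run_weight r
  | b :: s' => if b then runs_weight r.+1 s' else run_weight r + runs_weight 0 s'
  end.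

Definition weight (s : seq bool) : nat := runs_weight 0 s.

Fixpoint head_run (s : seq bool) : nat := if s is true :: s' then (head_run s').+1 else 0.

Definition clear_head (s : seq bool) : seq bool := if s is _ :: s' then false :: s' else [::].

Fixpoint clear2 (s : seq bool) (c : nat) : seq bool :=
  match s, c with
  | [::], _ => [::]
  | _ :: s', 0 => false :: clear_head s'
  | b :: s', c'.+1 => b :: clear2 s' c'
  end.

Lemma runs_weight_nseq a r s : runs_weight r (nseq a true ++ s) = runs_weight (r + a) s.
Proof. by elim: a r => [|a IHa] r /=; rewrite ?addn0 // IHa addSnnS. Qed.

Lemma weight_nseq a : weight (nseq a true) = run_weight a.
Proof. by rewrite -[nseq a true]cats0 /weight runs_weight_nseq. Qed.

Lemma weight_nseq_false a s : weight (nseq a true ++ false :: s) = run_weight a + weight s.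
Proof. by rewrite /weight runs_weight_nseq. Qed.

Lemma runs_weight_shift r s :
  runs_weight r s + run_weight (head_run s) = weight s + run_weight (r + head_run s).
Proof.
rewrite /weight; elim: s r => [|[] s IHs] r /=; first by rewrite addn0; lia.
  by have := IHs r.+1; have := IHs 1; lia.
by lia.
Qed.

Lemma runs_weight_le_count r s : runs_weight r s <= r + count id s.
Proof.
by elim: s r => [|[] s IHs] r /=; [lia | have := IHs r.+1 | have := IHs 0]; lia.
Qed.

Lemma count_clear_head s : count id s = count id (clear_head s) + nth false s 0.
Proof. by case: s => [|[] s] /=; lia. Qed.

Lemma count_clear2 s c :
  count id s = count id (clear2 s c) + nth false s c + nth false s c.+1.
Proof.
elim: s c => [|b s IHs] [|c] //=; last by have := IHs c; lia.
by case: s {IHs} => [|b' s] /=; case: b; try case: b'; lia.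
Qed.

Lemma runs_weight_clear2 r s c : count id (clear2 s c) < count id s ->
  runs_weight r s < runs_weight r (clear2 s c) + 2 * (count id s - count id (clear2 s c)).
Proof.
elim: s c r => [|b s IHs] [|c] r //=; last first.
  by case: b => /=; [have := IHs c r.+1 | have := IHs c 0]; lia.
case: s {IHs} => [|b' s] /=; first by case: b; lia.
have := runs_weight_shift r.+2 s; have := runs_weight_shift r.+1 s.
have := runs_weight_shift 1 s; rewrite /weight.
by case: b; case: b' => /=; lia.
Qed.

Lemma weight_clear_head s : count id (clear_head s) < count id s ->
  weight s < weight (clear_head s) + 2 * (count id s - count id (clear_head s)).
Proof.
by case: s => [|b s] //=; have := runs_weight_shift 1 s; rewrite /weight; case: b => /=; lia.
Qed.

Lemma clear2_cat s1 s2 c : clear2 (s1 ++ s2) (size s1 + c) = s1 ++ clear2 s2 c.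
Proof. by elim: s1 => //= b s1 ->. Qed.

Lemma clear2_run_end a s :
  clear2 (nseq a.+2 true ++ s) a = nseq a true ++ [:: false, false & s].
Proof. by elim: a => //= a ->. Qed.

Definition cheap_pair (s : seq bool) (c : nat) : bool :=
  [&& c.+1 < size s, nth false s c, nth false s c.+1 &
      weight s + weight s %% 2 <= weight (clear2 s c) + 2].

Lemma cheap_pair_run_end a s : run_weight a.+2 %% 2 = 1 \/ weight s %% 2 = 0 ->
  cheap_pair (nseq a.+2 true ++ false :: s) a.
Proof.
rewrite /cheap_pair clear2_run_end !weight_nseq_false size_cat !nth_cat !size_nseq.
rewrite !nth_nseq ltnSn (_ : a < a.+2) // addnS ltnS leq_addr /weight /= => parity; lia.
Qed.

Lemma cheap_pair_behind a s c : run_weight a %% 2 = 0 -> cheap_pair s c ->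
  cheap_pair (nseq a true ++ false :: s) (a.+1 + c).
Proof.
move=> even_a; rewrite -cat_rcons (_ : a.+1 = size (rcons (nseq a true) false)).
  rewrite /cheap_pair clear2_cat size_cat !nth_cat !ltnNge -!addnS !leq_addr leq_add2l /=.
  rewrite !addKn !cat_rcons !weight_nseq_false => /and4P[-> -> -> le_w] /=; lia.
by rewrite size_rcons size_nseq.
Qed.

Lemma exists_cheap_pair s : 0 < weight s -> exists c, cheap_pair s c.
Proof.
suff run_prefix a : 0 < weight (nseq a true ++ s) -> exists c, cheap_pair (nseq a true ++ s) c.
  exact: (run_prefix 0).
elim: s a => [|[] s IHs] a.
- rewrite cats0 weight_nseq; case: a => [|[|a]] // _; exists a.
  rewrite /cheap_pair -[nseq _ _]cats0 clear2_run_end cats0 size_nseq !nth_nseq.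
  by rewrite (_ : a < a.+2) // ltnSn weight_nseq weight_nseq_false /weight /=; lia.
- by rewrite (_ : nseq a true ++ _ = nseq a.+1 true ++ s); [apply: IHs | elim: a => //= a ->].
(* Either the end of the leading run is a cheap pair, or that run has even weight and a cheap
   pair of the rest stays cheap. *)
rewrite weight_nseq_false => pos.
case: (boolP ((1 < a) && ((run_weight a %% 2 == 1) || (weight s %% 2 == 0)))).
  by case: a pos => [|[|a]] // _ /andP[_ parity]; exists a; apply: cheap_pair_run_end; lia.
move=> not_end; have [|c pc] := IHs 0; first by move: not_end; rewrite /=; lia.
by exists (a.+1 + c); apply: cheap_pair_behind => //; move: not_end; lia.
Qed.

Lemma exists_clear2_single s : 0 < count id s ->
  exists2 c, c < size s & (count id (clear2 s c)).+1 = count id s.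
Proof.
elim: s => [|b s IHs] //=; case: (posnP (count id s)) => [s0 pos | /IHs[c lt_c <-]].
  by exists 0 => //=; have := count_clear_head s; move: pos; case: b => /=; lia.
by exists c.+1 => //=; lia.
Qed.

Lemma exists_clear_single s : 0 < count id s ->
  (count id (clear_head s)).+1 = count id s \/
  exists2 c, c.+1 < size s & (count id (clear2 s c)).+1 = count id s.
Proof.
elim: s => [|[] s IHs] //= pos; first by left.
right; have [single|[c lt_c <-]] := IHs pos.
  by exists 0 => //=; case: s pos {IHs} single.
by exists c.+1.
Qed.

Lemma mkseq_cons (T : Type) (f : nat -> T) m : mkseq f m.+1 = f 0 :: mkseq (f \o succn) m.
Proof. by rewrite /mkseq /= -add1n iotaDl -map_comp. Qed.

Lemma eq_in_mkseq (T : Type) (f g : nat -> T) m :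
  (forall j, j < m -> f j = g j) -> mkseq f m = mkseq g m.
Proof. by move=> fg; apply/eq_in_map => j; rewrite mem_iota => /andP[_ /fg]. Qed.

Lemma mkseq_clear2 f m c :
  mkseq (fun j => f j && ~~ ((j == c) || (j == c.+1))) m = clear2 (mkseq f m) c.
Proof.
elim: m f c => [|m IHm] f [|c] //; rewrite !mkseq_cons /= ?andbT ?andbF; congr cons.
  case: m {IHm} => [|m] //; rewrite !mkseq_cons /= andbF; congr cons.
  by apply: eq_mkseq => j /=; rewrite andbT.
by rewrite -IHm; apply: eq_mkseq => j /=.
Qed.

Lemma mkseq_clear_head f m : mkseq (fun j => f j && (j != 0)) m = clear_head (mkseq f m).
Proof.
case: m => [|m] //; rewrite !mkseq_cons /= andbF; congr cons.
by apply: eq_mkseq => j /=; rewrite andbT.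
Qed.

Lemma mkseq_true m : mkseq (fun=> true) m = nseq m true.
Proof. by elim: m => // m IHm; rewrite mkseqS IHm -cats1 -(nseqD _ 1) addn1. Qed.

Lemma mkseq_hole a m : a < m ->
  mkseq (fun j => j != a) m = nseq a true ++ false :: nseq (m - a.+1) true.
Proof.
elim: a m => [|a IHa] [|m] //= lt_am; rewrite mkseq_cons /=.
  by rewrite subn1 -mkseq_true; congr cons; apply: eq_mkseq.
by rewrite -IHa //; congr cons; apply: eq_mkseq.
Qed.

Lemma count_mkseq (f : nat -> bool) k : count id (mkseq f k) = \sum_(0 <= j < k) f j.
Proof.
elim: k => [|k IHk]; first by rewrite big_geq.
by rewrite mkseqS -cats1 count_cat big_nat_recr //= IHk; lia.
Qed.

Lemma sum_nat_pairs (f : nat -> nat) k :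
  \sum_(0 <= i < k + k) f i = \sum_(0 <= j < k) (f (2 * j) + f (2 * j + 1)).
Proof.
elim: k => [|k IHk]; first by rewrite !big_geq.
rewrite addSn addnS !big_nat_recr //= IHk -addnA; congr (_ + (f _ + f _)); lia.
Qed.

Section PathRows.
Variables n m : nat.
Hypothesis n_eq : n = m + m.
Local Notation e := (path_rel n).
Local Notation move D x := (D :|: nbhd e x).

(* Writing [{set _}] rather than [{set 'I_n}] keeps the canonical finType of ['I_n] used by
   [path_rel n]; the other spelling yields convertible but syntactically different cardinals,
   which [lia] treats as distinct atoms. *)
Definition undom (D : {set _}) (i : nat) : bool :=
  [exists y : 'I_n, (val y == i) && (y \notin D)].

Lemma undom_val D (y : 'I_n) : undom D y = (y \notin D).
Proof.
by apply/existsP/idP => [[z /andP[/eqP/val_inj ->]] | yD] //; exists y; rewrite eqxx.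
Qed.

Lemma undom_out D i : n <= i -> undom D i = false.
Proof.
move=> le_ni; apply/existsP => -[y /andP[/eqP yi _]].
by move: le_ni; rewrite -yi leqNgt ltn_ord.
Qed.

Lemma undom_move D (x : 'I_n) i :
  undom (move D x) i = undom D i && ~~ ((x.+1 == i) || (i.+1 == x)).
Proof.
case: (ltnP i n) => [lt_in | ?]; last by rewrite !undom_out.
by rewrite -[i]/(val (Ordinal lt_in)) !undom_val in_setU in_set negb_or.
Qed.

(* [row false D] and [row true D] record which of the vertices 0, 2, 4, ... and 1, 3, 5, ...
   are undominated.  Vertex 2c+b+1 dominates cells c and c+1 of [row b] (only cell c for the
   last vertex: [clear2] ignores missing cells) and vertex 0 dominates cell 0 of [row true]. *)
Definition row (b : bool) (D : {set _}) : seq bool :=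
  mkseq (fun j => undom D (2 * j + b)) m.

Definition weight_rows (D : {set _}) : nat := weight (row false D) + weight (row true D).

Lemma weight_rowsC b D : weight_rows D = weight (row b D) + weight (row (~~ b) D).
Proof. by case: b; rewrite /weight_rows // addnC. Qed.

Lemma card_undom_rows b D : #|~: D| = count id (row b D) + count id (row (~~ b) D).
Proof.
have -> : #|~: D| = \sum_(0 <= i < n) undom D i.
  rewrite -sum1_card big_mkcond big_mkord /=; apply: eq_bigr => i _.
  by rewrite in_setC undom_val; case: (i \in D).
rewrite n_eq sum_nat_pairs big_split /= !count_mkseq.
by case: b; [rewrite addnC|]; congr (_ + _); apply: eq_bigr => j _; congr undom; lia.
Qed.

Lemma row_move_pair D (x : 'I_n) (b : bool) c : x = 2 * c + b + 1 :> nat ->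
  row b (move D x) = clear2 (row b D) c /\ row (~~ b) (move D x) = row (~~ b) D.
Proof.
move=> xE; rewrite /row -mkseq_clear2; split; apply: eq_mkseq => j; rewrite undom_move xE.
  by congr (_ && ~~ _); case: b xE => /=; lia.
by rewrite (_ : _ || _ = false) ?andbT //; case: b xE => /=; lia.
Qed.

Lemma row_move_head D (x : 'I_n) : x = 0 :> nat ->
  row true (move D x) = clear_head (row true D) /\ row false (move D x) = row false D.
Proof.
move=> xE; rewrite /row -mkseq_clear_head; split; apply: eq_mkseq => j; rewrite undom_move xE.
  by congr (_ && _); lia.
by rewrite (_ : _ || _ = false) ?andbT //; lia.
Qed.

Variant move_rows_spec D (x : 'I_n) : Prop :=
  | MoveRowsHead of row true (move D x) = clear_head (row true D)
      & row false (move D x) = row false D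
  | MoveRowsPair b c of row b (move D x) = clear2 (row b D) c
      & row (~~ b) (move D x) = row (~~ b) D.

Lemma move_rowsP D x : move_rows_spec D x.
Proof.
case: (posnP x) => [x0 | x_gt0]; first by case: (row_move_head D x0); left.
have [|row_b row_nb] := @row_move_pair D x (x %% 2 == 0) (x.-1 %/ 2).
  by case: (x %% 2 =P 0) => /=; lia.
exact: MoveRowsPair row_b row_nb.
Qed.

Lemma weight_rows_le_card D : weight_rows D <= #|~: D|.
Proof.
rewrite (card_undom_rows false) /weight_rows /weight /=.
have := runs_weight_le_count 0 (row false D).
by have := runs_weight_le_count 0 (row true D); lia.
Qed.

Lemma card_move_ge D x : #|~: D| <= #|~: move D x| + 2.
Proof.
case: (move_rowsP D x) => [row_t row_f | b c row_b row_nb].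
  rewrite !(card_undom_rows true) /= row_t row_f.
  by have := count_clear_head (row true D); lia.
by rewrite !(card_undom_rows b) row_b row_nb; have := count_clear2 (row b D) c; lia.
Qed.

Lemma exists_single_move D : 0 < #|~: D| -> exists x, (#|~: move D x|).+1 = #|~: D|.
Proof.
have size_row b : size (row b D) = m by rewrite size_mkseq.
have vertex k : k < n -> exists x : 'I_n, x = k :> nat by move=> lt_kn; exists (Ordinal lt_kn).
case: (posnP (count id (row false D))) => [row_f0 | /exists_clear2_single[c]].
  rewrite (card_undom_rows true) row_f0 addn0 => /exists_clear_single[single | [c]].
    have [|x /(row_move_head D)[row_t row_f]] := vertex 0.
      by move: (size_row true); case: (row true D) single => //=; lia.
    by exists x; rewrite (card_undom_rows true) /= row_t row_f row_f0 -single addn0.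
  rewrite size_row => lt_c single.
  have [|x /(row_move_pair D)[row_t row_f]] := vertex (2 * c + true + 1); first lia.
  by exists x; rewrite (card_undom_rows true) /= row_t row_f row_f0 -single addn0.
rewrite size_row => lt_c single _.
have [|x /(row_move_pair D)[row_f row_t]] := vertex (2 * c + false + 1); first lia.
by exists x; rewrite !(card_undom_rows false) row_f row_t -single.
Qed.

Lemma staller_move_weight D x : legal_move e D x ->
  weight_rows D + 1 + 2 * #|~: move D x| <= weight_rows (move D x) + 2 * #|~: D|.
Proof.
move/card_setC_move_lt; case: (move_rowsP D x) => [row_t row_f | b c row_b row_nb].
  rewrite !(card_undom_rows true) !(weight_rowsC true) /= row_t row_f => drop.
  have drop_t : count id (clear_head (row true D)) < count id (row true D) by lia.
  by have := weight_clear_head drop_t; lia.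
rewrite !(card_undom_rows b) !(weight_rowsC b) row_b row_nb => drop.
have drop_b : count id (clear2 (row b D) c) < count id (row b D) by lia.
by have := runs_weight_clear2 0 drop_b; rewrite /weight; lia.
Qed.

Lemma dominator_move_weight D : [exists x, legal_move e D x] ->
  exists2 x, legal_move e D x &
    weight_rows D + weight_rows D %% 2 + 2 + 2 * #|~: move D x| <=
    weight_rows (move D x) + 2 * #|~: D|.
Proof.
case/existsP=> x0 Dx0; case: (posnP (weight_rows D)) => [W0 | W_gt0].
  by exists x0 => //; have := card_setC_move_lt Dx0; lia.
have [b pos parity] : exists2 b, 0 < weight (row b D) &
    weight_rows D %% 2 <= weight (row b D) %% 2.
  exists ((weight (row false D) == 0) || (weight (row true D) %% 2 == 1));
  by move: W_gt0; rewrite /weight_rows; case: eqP; case: eqP => /=; lia.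
have [c /and4P[lt_c c_in c1_in le_w]] := exists_cheap_pair pos.
have [x xE] : exists x : 'I_n, x = 2 * c + b + 1 :> nat.
  have lt_x : 2 * c + b + 1 < n by move: lt_c; rewrite size_mkseq; have := leq_b1 b; lia.
  by exists (Ordinal lt_x).
have [row_b row_nb] := row_move_pair D xE.
have drop2 : #|~: move D x| + 2 = #|~: D|.
  by rewrite !(card_undom_rows b) row_b row_nb (count_clear2 (row b D) c) c_in c1_in; lia.
exists x; first by apply: contraT => /illegal_move_id xD; move: drop2; rewrite xD; lia.
by move: parity; rewrite !(weight_rowsC b) row_b row_nb -drop2; lia.
Qed.

Lemma tg_value_path_ub k D : tg_value e k D true <= #|~: D| - (weight_rows D + 1) %/ 2.
Proof.
apply: (proj1 (@tg_value_ub _ e (fun D => #|~: D| - (weight_rows D + 1) %/ 2)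
  (fun D => #|~: D| - weight_rows D %/ 2) _ _ k D)).
  move=> D' /dominator_move_weight[x Dx le_w]; exists x => //.
  by have := weight_rows_le_card D'; have := weight_rows_le_card (move D' x); lia.
move=> D' x Dx; have := staller_move_weight Dx; have := card_setC_move_lt Dx.
by have := weight_rows_le_card D'; have := weight_rows_le_card (move D' x); lia.
Qed.

Lemma tg_value_path_lb k D : #|~: D| <= k -> #|~: D| - #|~: D|.+1 %/ 3 <= tg_value e k D true.
Proof.
move=> le_k; apply: (proj1 (@tg_value_lb _ e (fun D => #|~: D| - #|~: D|.+1 %/ 3)
  (fun D => #|~: D| - #|~: D| %/ 3) _ _ _ _ k D le_k)).
- by move=> D'; lia.
- by move=> D'; exact: leq_subr.
- by move=> D' x /card_setC_move_lt; have := card_move_ge D' x; lia.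
move=> D' pos; have [|x single] := exists_single_move (D := D'); first lia.
exists x; last lia.
by apply: contraT => /illegal_move_id xD; move: single; rewrite xD; lia.
Qed.

Lemma row_set1 (b : bool) (v : 'I_n) : row b [set v] = mkseq (fun j => 2 * j + b != v) m.
Proof.
apply: eq_in_mkseq => j lt_jm; have lt_jn : 2 * j + b < n by case: b; lia.
by rewrite -[2 * j + b]/(val (Ordinal lt_jn)) undom_val in_set1.
Qed.

Lemma weight_rows_set1 (v : 'I_n) :
  weight_rows [set v] = run_weight m + run_weight (v %/ 2) + run_weight (m - (v %/ 2).+1).
Proof.
have lt_vm : v %/ 2 < m by have := ltn_ord v; lia.
have row_v : row (v %% 2 == 1) [set v] =
    nseq (v %/ 2) true ++ false :: nseq (m - (v %/ 2).+1) true.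
  rewrite row_set1 -mkseq_hole //; apply: eq_mkseq => j.
  by congr negb; case: (v %% 2 =P 1) => /= ?; apply/eqP/eqP; lia.
have row_nv : row (v %% 2 != 1) [set v] = nseq m true.
  rewrite row_set1 -mkseq_true; apply: eq_mkseq => j.
  by case: (v %% 2 =P 1) => /= ?; apply/eqP; lia.
by rewrite (weight_rowsC (v %% 2 == 1)) row_v row_nv weight_nseq_false !weight_nseq; lia.
Qed.
End PathRows.

Unset Implicit Arguments.

Theorem lemma3p6 (n : nat) (v : 'I_n) :
  4 <= n -> n %% 6 = 4 ->
  gamma_tg_at (path_rel n) v <= gamma_tg (path_rel n) - 1.
Proof.
move=> n_ge4 n_mod6; have n_eq : n = n %/ 2 + n %/ 2 by lia.
have gamma_lb := tg_value_path_lb n_eq (D := set0) (max_card _).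
have gamma_v_ub := tg_value_path_ub n_eq #|'I_n| [set v].
rewrite setC0 cardsT card_ord in gamma_lb.
rewrite cardsC1 card_ord (weight_rows_set1 n_eq) in gamma_v_ub.
by rewrite /gamma_tg /gamma_tg_at card_ord; lia.
Qed.
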